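(* Let $\Psi$ be an SP-expression in the $n\ge 1$ distinct variables $x_1,\dots,x_n$, let $\alpha$ be the SP-order on $X=\{x_1,\dots,x_n\}$ determined by $\Psi$, and let $\alpha^{*}$ be the SP-order determined by the dual expression $\Psi^{*}$. Define the quantitative entropy $H_q=\log_2|R(\alpha)|$, the positional entropy $H_p=\log_2|R(\alpha^{*})|$, and $H_{max}=\log_2(n!)$. Then $$H_p+H_q=H_{max},$$ equivalently $|R(\alpha)|\cdot|R(\alpha^{*})| = n!$.
   Context: All partial orders are finite. For posets $\alpha_1=(A_1,\sqsubseteq_1)$, $\alpha_2=(A_2,\sqsubseteq_2)$ with $A_1\cap A_2=\emptyset$, the series composition is $\alpha_1\otimes\alpha_2=(A_1\cup A_2,\ \sqsubseteq_1\cup\sqsubseteq_2\cup(A_1\times A_2))$ (every element of $\alpha_1$ lies below every element of $\alpha_2$) and the parallel composition is $\alpha_1\parallel\alpha_2=(A_1\cup A_2,\ \sqsubseteq_1\cup\sqsubseteq_2)$. An SP-expression is built from variables $x_i$ using the binary symbols $\otimes$ and $\parallel$ (with brackets), each variable occurring at most once. The SP-order determined by an SP-expression $\Psi$ is obtained by interpreting each variable $x_i$ as the one-element poset on $\{x_i\}$, each $\otimes$ as series composition and each $\parallel$ as parallel composition, evaluated according to the bracketing; its underlying set is the set of variables of $\Psi$. The dual expression $\Psi^{*}$ is obtained from $\Psi$ by interchanging every $\otimes$ with $\parallel$ and vice versa (e.g. the dual of $((x_1\otimes x_2)\parallel x_3)\otimes x_4$ is $((x_1\parallel x_2)\otimes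 x_3)\parallel x_4$). For a poset $\alpha=(X,\sqsubseteq)$ with $|X|=n$, its state space $R(\alpha)$ is the set of root states, i.e. bijections $l:X\to\{1,\dots,n\}$ that are increasing ($x\sqsubseteq y$, $x\neq y$ implies $l(x)<l(y)$); these are the topological sorts (linear extensions) of $\alpha$ up to isomorphism of labelings, the elements $x_1,\dots,x_n$ being distinguishable. In particular for the discrete (antichain) order $\Delta_n$ one has $|R(\Delta_n)|=n!$. *)

From mathcomp Require Import all_boot all_order all_fingroup.
Set Implicit Arguments. Unset Strict Implicit. Unset Printing Implicit Defensive.

Inductive spexpr (T : Type) : Type :=
  | SPVar of T
  | SPSer of spexpr T & spexpr T
  | SPPar of spexpr T & spexpr T.

Section SP.
Variable T : eqType.

Fixpoint sp_vars (e : spexpr T) : seq T :=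
  match e with
  | SPVar x => [:: x]
  | SPSer a b => sp_vars a ++ sp_vars b
  | SPPar a b => sp_vars a ++ sp_vars b
  end.

Fixpoint sp_le (e : spexpr T) (x y : T) : bool :=
  match e with
  | SPVar z => (x == z) && (y == z)
  | SPSer a b => [|| sp_le a x y, sp_le b x y | (x \in sp_vars a) && (y \in sp_vars b)]
  | SPPar a b => sp_le a x y || sp_le b x y
  end.

Fixpoint sp_dual (e : spexpr T) : spexpr T :=
  match e with
  | SPVar x => SPVar x
  | SPSer a b => SPPar (sp_dual a) (sp_dual b)
  | SPPar a b => SPSer (sp_dual a) (sp_dual b)
  end.
End SP.

Definition sp_wf (n : nat) (e : spexpr 'I_n) : Prop :=
  uniq (sp_vars e) /\ forall x : 'I_n, x \in sp_vars e.

(* Root states of the order determined by e on X = 'I_n: bijections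
   l : X -> {0,..,n-1} (labels shifted by one) that are increasing. *)
Definition root_states (n : nat) (e : spexpr 'I_n) : {set {perm 'I_n}} :=
  [set l : {perm 'I_n} | [forall x, forall y,
      (sp_le e x y && (x != y)) ==> (l x < l y)]].

From mathcomp Require Import all_boot all_order all_fingroup.
From mathcomp Require Import zify.
Set Implicit Arguments. Unset Strict Implicit. Unset Printing Implicit Defensive.

(* A root state is the same thing as a linear extension, i.e. an arrangement
   of the variables in which every x below y comes before y.  Linear
   extensions are counted by structural recursion on the expression:
   - of a series composition a (x) b, they are the concatenations of a linear
     extension of a with one of b;
   - of a parallel composition a || b, they are the interleavings of a linear
     extension of a with one of b, an interleaving being fixed by a mask of
     |a| + |b| bits with |a| true bits, of which there are 'C(|a|+|b|, |a|).  Duality swaps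
   the two rules, so lin_count e * lin_count (dual e) = |vars e|! follows from
   'C(p + q, p) * p! * q! = (p + q)!.  Finally root states (permutations of
   'I_n) are put in bijection with linear extensions by listing the variables
   in increasing label order. *)

Section Sequences.
Variable T : eqType.
Implicit Types (s t u : seq T) (m : bitseq) (p : pred T).

Lemma subseq_pairE s x y : uniq s -> x != y ->
  subseq [:: x; y] s = [&& x \in s, y \in s & index x s < index y s].
Proof.
elim: s => [|z s IH] //= /andP[zs us] xy; rewrite !inE.
have [exz|xz] := eqVneq x z.
  by subst z; rewrite sub1seq eq_sym (negbTE xy) /= andbT.
rewrite (IH us xy) /=; have [->|//] := eqVneq y z.
by rewrite (negbTE zs) !andbF.
Qed.

Lemma filter_cat_split p s t : all p s -> all (predC p) t ->
  filter p (s ++ t) = s /\ filter (predC p) (s ++ t) = t.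
Proof.
move=> ps npt; have nps : filter (predC p) s = [::].
  by rewrite -(filter_pred0 s); apply: eq_in_filter => x /(allP ps) /= ->.
have pt : filter p t = [::].
  by rewrite -(filter_pred0 t); apply: eq_in_filter => x /(allP npt) /= /negbTE.
by rewrite !filter_cat nps pt (all_filterP ps) (all_filterP npt) cats0.
Qed.

Lemma filter_partition p u : uniq u ->
  (forall x y, x \in u -> y \in u -> p x -> ~~ p y -> subseq [:: x; y] u) ->
  u = filter p u ++ filter (predC p) u.
Proof.
elim: u => [|z u IH] //= /andP[zu uu] before.
have notz x : x \in u -> x != z by apply: contraTneq => ->.
case pz: (p z) => /=.
  congr (_ :: _); apply: IH => // x y xu yu px npy.
  have := before x y; rewrite !inE xu yu !orbT => /(_ isT isT px npy) /=.
  by rewrite (negbTE (notz x xu)).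
have npu : all (predC p) u.
  apply/allP => x xu /=; apply/negP => px.
  have := before x z; rewrite !inE xu eqxx orbT pz => /(_ isT isT px isT).
  rewrite (negbTE (notz x xu)) => /mem_subseq/(_ z).
  by rewrite !inE eqxx orbT (negbTE zu) => /(_ isT).
by have [/= -> /= ->] := filter_cat_split (isT : all p [::]) npu.
Qed.

Lemma index_inj u v : uniq u -> size u = size v ->
  (forall x, index x u = index x v) -> u = v.
Proof.
case: u => [|a u'] uu; first by case: v.
move=> sz same; apply: (eq_from_nth (x0 := a)) => // i ilt.
set w := nth a (a :: u') i.
have wi : index w v = i by rewrite -same index_uniq.
have wv : w \in v by rewrite -index_mem wi -sz.
by rewrite -wi nth_index.
Qed.

Lemma mem_map_cons c x s (A : seq (seq T)) :
  (x :: s \in map (cons c) A) = (x == c) && (s \in A).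
Proof.
apply/mapP/andP => [[s' s'A [-> ->]]|[/eqP -> sA]]; first by [].
by exists s.
Qed.

Lemma nil_map_cons c (A : seq (seq T)) : ([::] \in map (cons c) A) = false.
Proof. by apply/mapP => -[]. Qed.

Lemma mem_pairs (S R : eqType) (s : seq S) (r : seq R) (q : S * R) :
  (q \in [seq (x, y) | x <- s, y <- r]) = (q.1 \in s) && (q.2 \in r).
Proof.
by apply/allpairsP/andP => [[[x y] [/= xs yr ->]]|[xs yr]] //; exists q; case: q xs yr.
Qed.

Fixpoint interleave m s t : seq T :=
  match m with
  | [::] => [::]
  | true :: m' => if s is x :: s' then x :: interleave m' s' t else [::]
  | false :: m' => if t is y :: t' then y :: interleave m' s t' else [::]
  end.

Lemma interleave_filter p u :
  interleave (map p u) (filter p u) (filter (predC p) u) = u.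
Proof. by elim: u => [|z u IH] //=; case: (p z) => /=; rewrite IH. Qed.

Lemma interleaveK p m s t :
  all p s -> all (predC p) t -> count id m = size s -> size m = size s + size t ->
  [/\ filter p (interleave m s t) = s, filter (predC p) (interleave m s t) = t &
      map p (interleave m s t) = m].
Proof.
elim: m s t => [|[] m IH] s t.
- by case: s => [|x s]; case: t => [|y t] //= _ _ _; rewrite ?addSn ?addnS.
- case: s => [|x s] //= /andP[px ps] pt [cm]; rewrite addSn => -[sm].
  by have [-> -> ->] := IH s t ps pt cm sm; rewrite px.
- case: t => [|y t] ps /=.
    by move=> _ cm sm; have := count_size id m; lia.
  move=> /andP[py pt] cm; rewrite addnS => -[sm].
  by have [-> -> ->] := IH s t ps pt cm sm; rewrite py (negbTE py).
Qed.

End Sequences.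

Fixpoint masks (N k : nat) : seq bitseq :=
  match N, k with
  | 0, 0 => [:: [::]]
  | 0, _.+1 => [::]
  | N'.+1, 0 => map (cons false) (masks N' 0)
  | N'.+1, k'.+1 => map (cons true) (masks N' k') ++ map (cons false) (masks N' k)
  end.

Lemma mem_masks N k m : (m \in masks N k) = (size m == N) && (count id m == k).
Proof.
elim: N k m => [|N IH] [|k] [|b m] //=; rewrite ?mem_cat ?nil_map_cons //.
- by rewrite mem_map_cons IH eqSS; case: b; rewrite /= ?andbF.
- by rewrite !mem_map_cons !IH eqSS; case: b; rewrite /= ?add1n ?eqSS ?andbF ?orbF.
Qed.

Lemma uniq_masks N k : uniq (masks N k).
Proof.
have cons_inj c : injective (cons c) by move=> ? ? [].
elim: N k => [|N IH] [|k] //=; rewrite ?cat_uniq ?map_inj_uniq ?IH ?andbT //;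
  try exact: cons_inj.
by apply/hasPn => -[|b m]; rewrite ?nil_map_cons //= !mem_map_cons; case: b.
Qed.

Lemma size_masks N k : size (masks N k) = 'C(N, k).
Proof.
by elim: N k => [|N IH] [|k] //=; rewrite ?size_cat ?size_map ?IH ?bin0 // binS addnC.
Qed.

Section Enumeration.
Variable T : eqType.
Implicit Types (e a b : spexpr T).

Fixpoint linexts e : seq (seq T) :=
  match e with
  | SPVar x => [:: [:: x]]
  | SPSer a b => [seq s ++ t | s <- linexts a, t <- linexts b]
  | SPPar a b =>
      [seq interleave m st.1 st.2 | st <- [seq (s, t) | s <- linexts a, t <- linexts b],
         m <- masks (size (sp_vars a) + size (sp_vars b)) (size (sp_vars a))]
  end.

Fixpoint lin_count e : nat :=
  match e with
  | SPVar _ => 1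
  | SPSer a b => lin_count a * lin_count b
  | SPPar a b => lin_count a * lin_count b *
                 'C(size (sp_vars a) + size (sp_vars b), size (sp_vars a))
  end.

Lemma size_linexts e : size (linexts e) = lin_count e.
Proof.
by elim: e => [x|a IHa b IHb|a IHa b IHb] //=; rewrite !size_allpairs ?size_masks IHa IHb.
Qed.

Lemma sp_vars_dual e : sp_vars (sp_dual e) = sp_vars e.
Proof. by elim: e => [x|a IHa b IHb|a IHa b IHb] //=; rewrite IHa IHb. Qed.

(* Duality exchanges the two composition rules, so at every node the
   binomial coefficient appears exactly once in the product of the counts
   of e and its dual, and 'C(p + q, p) * p`! * q`! = (p + q)`!. *)
Lemma lin_count_dual e : lin_count e * lin_count (sp_dual e) = (size (sp_vars e))`!.
Proof.
elim: e => [x|a IHa b IHb|a IHa b IHb] //=; rewrite ?sp_vars_dual size_cat;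
  rewrite -(bin_fact (leq_addr (size (sp_vars b)) (size (sp_vars a)))) addKn -IHa -IHb;
  move: (lin_count a) (lin_count b) (lin_count (sp_dual a)) (lin_count (sp_dual b)) 'C(_, _).
all: by move=> p q r s c; nia.
Qed.

End Enumeration.

Section LinearExtensions.
Variable T : finType.
Implicit Types (e a b : spexpr T) (s t u : seq T) (m : bitseq).

Definition respects e u : bool :=
  [forall x, forall y, (sp_le e x y && (x != y)) ==> subseq [:: x; y] u].

Lemma respectsP e u :
  reflect (forall x y, sp_le e x y -> x != y -> subseq [:: x; y] u) (respects e u).
Proof.
apply: (iffP forallP) => [H x y lxy nxy|H x].
  by have /forallP/(_ y) := H x; rewrite lxy nxy.
by apply/forallP => y; apply/implyP => /andP[]; apply: H.
Qed.

Definition linext e u : bool := perm_eq u (sp_vars e) && respects e u.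

Lemma sp_le_vars e x y : sp_le e x y -> (x \in sp_vars e) && (y \in sp_vars e).
Proof.
elim: e => [z|a IHa b IHb|a IHa b IHb] /=.
- by case/andP => /eqP -> /eqP ->; rewrite inE eqxx.
- rewrite !mem_cat; case/or3P => [/IHa|/IHb|//] /andP[-> ->]; by rewrite ?orbT.
- rewrite !mem_cat; case/orP => [/IHa|/IHb] /andP[-> ->]; by rewrite ?orbT.
Qed.

Lemma respects_subseq e s u : subseq s u -> respects e s -> respects e u.
Proof.
move=> su /respectsP rs; apply/respectsP => x y lxy nxy.
exact: subseq_trans (rs x y lxy nxy) su.
Qed.

Lemma respects_suborder a e u : (forall x y, sp_le a x y -> sp_le e x y) ->
  respects e u -> respects a u.
Proof.
by move=> sub /respectsP re; apply/respectsP => x y /sub; apply: re.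
Qed.

Lemma respects_par a b u : respects (SPPar a b) u = respects a u && respects b u.
Proof.
apply/idP/andP => [r|[/respectsP ra /respectsP rb]].
  by split; apply: respects_suborder r => x y /= ->; rewrite ?orbT.
by apply/respectsP => x y /orP[]; [apply: ra|apply: rb].
Qed.

Lemma linext_var x u : linext (SPVar x) u = (u == [:: x]).
Proof.
rewrite /linext; have -> : respects (SPVar x) u.
  by apply/respectsP => y z /andP[/eqP -> /eqP ->]; rewrite eqxx.
rewrite andbT; apply/idP/eqP => [pu|->]; last exact: perm_refl.
have := perm_size pu; case: u pu => [|y [|]] // pu _.
by have := perm_mem pu y; rewrite !inE eqxx => /esym/eqP ->.
Qed.

Definition in_vars e : pred T := [pred x | x \in sp_vars e].

Lemma in_varsE e x : in_vars e x = (x \in sp_vars e).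
Proof. by []. Qed.

Definition enumerates e (L : seq (seq T)) : Prop :=
  uniq L /\ forall u, (u \in L) = linext e u.

Section Composition.
Variables a b : spexpr T.
Hypothesis uniq_ab : uniq (sp_vars a ++ sp_vars b).

Let na := size (sp_vars a).
Let nb := size (sp_vars b).

Lemma notin_vars_left x : x \in sp_vars b -> ~~ in_vars a x.
Proof. by move: uniq_ab; rewrite cat_uniq => /and3P[_ /hasPn nab _] /nab. Qed.

Lemma linext_sides s t : linext a s -> linext b t ->
  all (in_vars a) s && all (predC (in_vars a)) t.
Proof.
move=> /andP[ps _] /andP[pt _]; apply/andP; split; apply/allP => x.
  by rewrite (perm_mem ps).
by rewrite (perm_mem pt) /=; apply: notin_vars_left.
Qed.

Lemma linext_restrict u : perm_eq u (sp_vars a ++ sp_vars b) ->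
  respects a u -> respects b u ->
  linext a (filter (in_vars a) u) && linext b (filter (predC (in_vars a)) u).
Proof.
move=> pu /respectsP ra /respectsP rb.
have /andP[sa sb] : all (in_vars a) (sp_vars a) && all (predC (in_vars a)) (sp_vars b).
  by rewrite (allss (sp_vars a)); apply/allP => x; apply: notin_vars_left.
have [fa fb] := filter_cat_split sa sb.
apply/andP; split; apply/andP; split.
- by rewrite -fa perm_filter.
- apply/respectsP => x y lxy nxy; rewrite subseq_filter ra // andbT.
  by have /andP[xa ya] := sp_le_vars lxy; rewrite /= !in_varsE xa ya.
- by rewrite -fb perm_filter.
- apply/respectsP => x y lxy nxy; rewrite subseq_filter rb // andbT.
  by have /andP[xb yb] := sp_le_vars lxy; rewrite /= !notin_vars_left.
Qed.

Lemma linext_cat s t : linext a s -> linext b t -> linext (SPSer a b) (s ++ t).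
Proof.
move=> /andP[ps /respectsP rs] /andP[pt /respectsP rt].
apply/andP; split; first by rewrite perm_cat.
apply/respectsP => x y /= /or3P[lxy|lxy|/andP[xa yb]] nxy.
- exact: subseq_trans (rs x y lxy nxy) (prefix_subseq _ _).
- exact: subseq_trans (rt x y lxy nxy) (suffix_subseq _ _).
- rewrite -[[:: x; y]]/([:: x] ++ [:: y]); apply: cat_subseq.
    by rewrite sub1seq (perm_mem ps).
  by rewrite sub1seq (perm_mem pt).
Qed.

Lemma linext_ser_split u : linext (SPSer a b) u ->
  [/\ linext a (filter (in_vars a) u), linext b (filter (predC (in_vars a)) u)
    & u = filter (in_vars a) u ++ filter (predC (in_vars a)) u].
Proof.
case/andP => pu ru.
have ra : respects a u by apply: respects_suborder ru => x y /= ->.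
have rb : respects b u by apply: respects_suborder ru => x y /= ->; rewrite orbT.
have /andP[ea eb] := linext_restrict pu ra rb.
split => //; apply: filter_partition; first by rewrite (perm_uniq pu).
move=> x y _ yu; rewrite /= !in_varsE => xa nya.
have yb : y \in sp_vars b.
  by move: yu; rewrite (perm_mem pu) mem_cat => /orP[ya|//]; rewrite ya in nya.
have /respectsP := ru; apply; first by rewrite /= xa yb !orbT.
by apply: contraNneq nya => <-.
Qed.

Lemma linext_interleave s t m : linext a s -> linext b t -> m \in masks (na + nb) na ->
  [/\ linext (SPPar a b) (interleave m s t), filter (in_vars a) (interleave m s t) = s,
      filter (predC (in_vars a)) (interleave m s t) = t
    & map (in_vars a) (interleave m s t) = m].
Proof.
move=> ea eb; rewrite mem_masks => /andP[/eqP sm /eqP cm].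
have /andP[ps pt] := linext_sides ea eb.
have [/andP[pes _] /andP[pet _]] := (ea, eb).
have cm' : count id m = size s by rewrite cm (perm_size pes).
have sm' : size m = size s + size t by rewrite sm (perm_size pes) (perm_size pet).
have [fs ft fm] := interleaveK ps pt cm' sm'.
split => //; apply/andP; split.
  by rewrite -(perm_filterC (in_vars a)) fs ft perm_cat.
rewrite respects_par; apply/andP; split.
  by apply: respects_subseq (filter_subseq (in_vars a) _) _; rewrite fs; case/andP: ea.
by apply: respects_subseq (filter_subseq (predC (in_vars a)) _) _; rewrite ft; case/andP: eb.
Qed.

Lemma linext_par_split u : linext (SPPar a b) u ->
  [/\ linext a (filter (in_vars a) u), linext b (filter (predC (in_vars a)) u)
    & map (in_vars a) u \in masks (na + nb) na].
Proof.
case/andP => pu; rewrite respects_par => /andP[ra rb].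
have /andP[ea eb] := linext_restrict pu ra rb.
split => //; rewrite mem_masks size_map (perm_size pu) size_cat eqxx /=.
by rewrite count_map -size_filter; case/andP: ea => /perm_size ->.
Qed.

(* Enumerations of the two parts combine into enumerations of their series
   and parallel compositions: the combination maps are injective since the
   parts can be read back by filtering along in_vars a. *)
Lemma enumerates_ser La Lb : enumerates a La -> enumerates b Lb ->
  enumerates (SPSer a b) [seq s ++ t | s <- La, t <- Lb].
Proof.
move=> [uLa La_ext] [uLb Lb_ext]; split.
  apply: allpairs_uniq => // -[s t] [s' t']; rewrite !mem_pairs /= !La_ext !Lb_ext.
  move=> /andP[sa tb] /andP[sa' tb'] est.
  have /andP[ps pt] := linext_sides sa tb; have /andP[ps' pt'] := linext_sides sa' tb'.
  have [fs ft] := filter_cat_split ps pt; have [fs' ft'] := filter_cat_split ps' pt'.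
  by congr (_, _); [rewrite -fs est fs'|rewrite -ft est ft'].
move=> u; apply/allpairsP/idP => [[[s t] /= [sa tb ->]]|eu].
  by apply: linext_cat; rewrite -?La_ext -?Lb_ext.
have [ea eb split_u] := linext_ser_split eu.
by exists (filter (in_vars a) u, filter (predC (in_vars a)) u); rewrite La_ext Lb_ext.
Qed.

Lemma enumerates_par La Lb : enumerates a La -> enumerates b Lb ->
  enumerates (SPPar a b) [seq interleave m st.1 st.2 |
    st <- [seq (s, t) | s <- La, t <- Lb], m <- masks (na + nb) na].
Proof.
move=> [uLa La_ext] [uLb Lb_ext]; split.
  apply: allpairs_uniq; [by apply: allpairs_uniq => // -[? ?] [? ?]|exact: uniq_masks|].
  move=> _ _ /allpairsP[[[s t] m] [/= stL mm ->]] /allpairsP[[[s' t'] m'] [/= stL' mm' ->]].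
  move: stL stL'; rewrite !mem_pairs /= !La_ext !Lb_ext => /andP[sa tb] /andP[sa' tb'] /= E.
  have [_ fs ft fm] := linext_interleave sa tb mm.
  have [_ fs' ft' fm'] := linext_interleave sa' tb' mm'.
  by congr ((_, _), _); [rewrite -fs E fs'|rewrite -ft E ft'|rewrite -fm E fm'].
move=> u; apply/allpairsP/idP => [[[[s t] m]]|eu].
  rewrite mem_pairs /= La_ext Lb_ext => -[/andP[sa tb] mm ->].
  by have [] := linext_interleave sa tb mm.
have [ea eb mm] := linext_par_split eu.
exists ((filter (in_vars a) u, filter (predC (in_vars a)) u), map (in_vars a) u).
by rewrite mem_pairs /= La_ext Lb_ext ea eb interleave_filter.
Qed.

End Composition.

Lemma linexts_enumerates e : uniq (sp_vars e) -> enumerates e (linexts e).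
Proof.
elim: e => [x|a IHa b IHb|a IHa b IHb] /= uv.
- by split=> // u; rewrite linext_var inE.
- move: (uv); rewrite cat_uniq => /and3P[ua _ ub].
  exact: enumerates_ser (IHa ua) (IHb ub).
- move: (uv); rewrite cat_uniq => /and3P[ua _ ub].
  exact: enumerates_par (IHa ua) (IHb ub).
Qed.

End LinearExtensions.

Section RootStates.
Variable n : nat.
Implicit Types (l : {perm 'I_n}) (e : spexpr 'I_n) (u : seq 'I_n).

Definition arrangement l : seq 'I_n := [seq (l^-1)%g i | i <- enum 'I_n].

Lemma index_arrangement l x : index x (arrangement l) = l x.
Proof.
by rewrite -{1}(permK l x) index_map ?index_enum_ord //; apply: perm_inj.
Qed.

Lemma perm_arrangement l : perm_eq (arrangement l) (enum 'I_n).
Proof.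
have ul : uniq (arrangement l) by rewrite map_inj_uniq ?enum_uniq //; apply: perm_inj.
apply: uniq_perm => // [|x]; first exact: enum_uniq.
by rewrite mem_enum -(permK l x) map_f ?mem_enum.
Qed.

Lemma arrangement_inj : injective arrangement.
Proof.
move=> l l' E; apply/permP => x; apply: val_inj.
by rewrite /= -index_arrangement E index_arrangement.
Qed.

Lemma arrangement_surj u : perm_eq u (enum 'I_n) -> exists l, arrangement l = u.
Proof.
move=> pu; have uu : uniq u by rewrite (perm_uniq pu) enum_uniq.
have szu : size u = n by rewrite (perm_size pu) size_enum_ord.
have xu x : x \in u by rewrite (perm_mem pu) mem_enum.
have ilt x : index x u < n by rewrite -[X in _ < X]szu index_mem.
have label_inj : injective (fun x => Ordinal (ilt x)).
  by move=> x y /(congr1 val) /= E; rewrite -[x](nth_index x (xu x)) E nth_index.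
exists (perm label_inj); apply: index_inj; rewrite ?(perm_uniq (perm_arrangement _)).
- by rewrite enum_uniq.
- by rewrite (perm_size (perm_arrangement _)) size_enum_ord.
- by move=> x; rewrite index_arrangement permE.
Qed.

Lemma root_statesE e l : (l \in root_states e) = respects e (arrangement l).
Proof.
have ul : uniq (arrangement l) by rewrite (perm_uniq (perm_arrangement l)) enum_uniq.
rewrite inE /respects; apply: eq_forallb => x; apply: eq_forallb => y.
case: (sp_le e x y) => //=; case: eqVneq => [//|nxy] /=.
by rewrite subseq_pairE // !(perm_mem (perm_arrangement l)) !mem_enum !index_arrangement.
Qed.

Lemma sp_wf_perm e : sp_wf e -> perm_eq (sp_vars e) (enum 'I_n).
Proof.
by case=> uv allv; apply: uniq_perm; rewrite ?enum_uniq // => x; rewrite mem_enum allv.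
Qed.

(* Root states correspond to linear extensions through their arrangement. *)
Lemma card_root_states e : sp_wf e -> #|root_states e| = lin_count e.
Proof.
move=> wf; have pv := sp_wf_perm wf.
have [uL memL] := linexts_enumerates (proj1 wf).
rewrite -size_linexts cardE -(size_map arrangement); apply: perm_size.
apply: uniq_perm => //; first by rewrite map_inj_uniq ?enum_uniq //; apply: arrangement_inj.
move=> u; rewrite memL /linext; apply/mapP/andP => [[l]|[pu ru]].
  rewrite mem_enum root_statesE => lr ->; split=> //.
  by apply: perm_trans (perm_arrangement l) _; rewrite perm_sym.
have [l el] := arrangement_surj (perm_trans pu pv).
by exists l; rewrite // mem_enum root_statesE el.
Qed.

End RootStates.

Theorem mainTheorem1 (n : nat) (Psi : spexpr 'I_n) :
  1 <= n -> sp_wf Psi ->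
  #|root_states Psi| * #|root_states (sp_dual Psi)| = n`!.
Proof.
move=> _ wf.
have wf_dual : sp_wf (sp_dual Psi) by rewrite /sp_wf sp_vars_dual.
rewrite !card_root_states // lin_count_dual.
by rewrite (perm_size (sp_wf_perm wf)) size_enum_ord.
Qed.
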